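(* Let $f\colon \mathbb{R}^n \times \mathbb{R}^p \to \overline{\mathbb{R}}$ be a proper nearly convex function, let $m(x)=\inf\{f(x,y)\mid y\in\mathbb{R}^p\}$, and suppose $m$ is finite at $\bar x \in \mathbb{R}^n$. For $\eta>0$ let $S_\eta(\bar x)=\{y\in\mathbb{R}^p\mid f(\bar x,y)\le m(\bar x)+\eta\}$, and let $S(\bar x)=\{y\in\mathbb{R}^p\mid m(\bar x)=f(\bar x,y)\}$. Then for every $\varepsilon \ge 0$, $$\partial_\varepsilon m(\bar x) = \bigcap_{\eta >0}\ \bigcap_{y \in S_\eta (\bar x)} \big\{\xi \in \mathbb{R}^n \mid (\xi,0) \in \partial_{\varepsilon +\eta} f (\bar x, y) \big\} =\bigcap_{\eta >0}\ \bigcup_{y \in \mathbb{R}^p} \big\{\xi \in \mathbb{R}^n \mid (\xi,0) \in \partial_{\varepsilon +\eta} f (\bar x, y) \big\}.$$ In particular, $$\partial m(\bar x) = \bigcap_{\eta >0}\ \bigcap_{y \in S_\eta (\bar x)} \big\{\xi \in \mathbb{R}^n \mid (\xi,0) \in \partial_{\eta} f (\bar x, y) \big\} =\bigcap_{\eta >0}\ \bigcup_{y \in \mathbb{R}^p} \big\{\xi \in \mathbb{R}^n \mid (\xi,0) \in \partial_{\eta} f (\bar x, y) \big\}.$$ In addition, if $S(\bar x)\neq \emptyset$, then for every $\varepsilon \ge 0$ and all $y \in S(\bar x)$, $$\partial_\varepsilon m(\bar x) = \big\{\xi \in \mathbb{R}^n \mid (\xi,0) \in \partial_{\varepsilon}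 f (\bar x, y) \big\}.$$
   Context: $\overline{\mathbb{R}}=[-\infty,\infty]$; proper means nonempty domain and never $-\infty$. A set $D$ is nearly convex if there is a convex $E$ with $E\subset D\subset\overline{E}$; a function is nearly convex if its epigraph is nearly convex. For a function $\psi$ on $\mathbb{R}^k$, $\varepsilon\ge0$ and $\bar z$ with $\psi(\bar z)$ finite, $\partial_\varepsilon\psi(\bar z)=\{\zeta\in\mathbb{R}^k\mid\langle\zeta,z-\bar z\rangle-\varepsilon\le\psi(z)-\psi(\bar z)\ \forall z\in\mathbb{R}^k\}$, and $\partial\psi=\partial_0\psi$. *)

From HB Require Import structures.
From mathcomp Require Import all_boot all_order all_algebra.
From mathcomp Require Import all_classical all_reals all_analysis.
Set Implicit Arguments. Unset Strict Implicit. Unset Printing Implicit Defensive.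
Import Order.TTheory GRing.Theory Num.Theory.
Import numFieldNormedType.Exports.
Local Open Scope classical_set_scope.
Local Open Scope ring_scope.

Section Defs.
Variable R : realType.

Definition dotv (k : nat) (u v : 'rV[R]_k) : R :=
  \sum_(i < k) u ord0 i * v ord0 i.

Definition dotp (n p : nat) (u v : 'rV[R]_n * 'rV[R]_p) : R :=
  dotv u.1 v.1 + dotv u.2 v.2.

Definition proper_fun (T : Type) (f : T -> \bar R) : Prop :=
  (exists z, (f z < +oo)%E) /\ (forall z, f z != -oo%E).

Definition nearly_convex_set (V : lmodType R) (D : set V)
  (cl : set V -> set V) : Prop :=
  exists E : set V, convex_set (E : set (convex_lmodType V)) /\ E `<=` D /\ D `<=` cl E.

Definition epigraph (n p : nat) (f : 'rV[R]_n * 'rV[R]_p -> \bar R) :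
  set ('rV[R]_n * 'rV[R]_p * R) :=
  [set zr | (f zr.1 <= zr.2%:E)%E].

(** Nearly convex function: its epigraph is nearly convex (closure taken in
    the product topology of (R^n x R^p) x R, i.e. the Euclidean one). *)
Definition nearly_convex_fun (n p : nat) (f : 'rV[R]_n * 'rV[R]_p -> \bar R) : Prop :=
  nearly_convex_set (epigraph f) (@closure ('rV[R]_n * 'rV[R]_p * R)%type).

(** epsilon-subdifferential of psi at z0, w.r.t. the inner product ip.
    It is empty unless psi z0 is finite. *)
Definition eps_subdiff (T : zmodType) (ip : T -> T -> R) (psi : T -> \bar R)
  (eps : R) (z0 : T) : set T :=
  [set zeta | psi z0 \is a fin_num /\
     forall z, ((ip zeta (z - z0) - eps)%:E <= psi z - psi z0)%E].

Definition marginal (n p : nat) (f : 'rV[R]_n * 'rV[R]_p -> \bar R)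
  (x : 'rV[R]_n) : \bar R :=
  ereal_inf [set f (x, y) | y in [set: 'rV[R]_p]].

End Defs.

From HB Require Import structures.
From mathcomp Require Import all_boot all_order all_algebra.
From mathcomp Require Import all_classical all_reals all_analysis.
From mathcomp Require Import lra.
Set Implicit Arguments. Unset Strict Implicit. Unset Printing Implicit Defensive.
Import Order.TTheory GRing.Theory Num.Theory.
Import numFieldNormedType.Exports.
Local Open Scope classical_set_scope.
Local Open Scope ring_scope.

(* Both kinds of subgradients are affine minorants of f: xi is in
   ∂_ε m(x̄) iff (x, y) ↦ <xi, x - x̄> + m(x̄) - ε minorizes f, and (xi, 0) is
   in ∂_δ f(x̄, y) iff (x, y) ↦ <xi, x - x̄> + f(x̄, y) - δ minorizes f.  As
   m(x̄) <= f(x̄, y) <= m(x̄) + η on S_η(x̄), the two constants differ by at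
   most η, and η → 0 is harmless because being a minorant is a closed
   condition on the constant. *)

Section AffineMinorant.
Variables (R : realType) (n p : nat).
Implicit Types (f : 'rV[R]_n * 'rV[R]_p -> \bar R) (xi xb : 'rV[R]_n).

Lemma dotv0l (k : nat) (v : 'rV[R]_k) : dotv 0 v = 0.
Proof. by rewrite /dotv big1 // => i _; rewrite mxE mul0r. Qed.

Lemma dotp_row0r xi (w : 'rV[R]_n * 'rV[R]_p) : dotp (xi, 0) w = dotv xi w.1.
Proof. by rewrite /dotp dotv0l addr0. Qed.

Definition affine_minorant f xi xb (c : R) : Prop :=
  forall x y, ((dotv xi (x - xb) + c)%:E <= f (x, y))%E.

Lemma affine_minorant_le f xi xb c c' :
  c' <= c -> affine_minorant f xi xb c -> affine_minorant f xi xb c'.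
Proof.
move=> c'c fc x y; apply: le_trans (fc x y).
by rewrite lee_fin lerD2l.
Qed.

Lemma affine_minorant_closed f xi xb c :
  (forall e, 0 < e -> affine_minorant f xi xb (c - e)) ->
  affine_minorant f xi xb c.
Proof.
move=> fc x y; apply/lee_subgt0Pr => e e0.
by rewrite -EFinB -addrA; apply: fc.
Qed.

Lemma marginal_le f x (y : 'rV[R]_p) : (marginal f x <= f (x, y))%E.
Proof. by apply: ereal_inf_lbound; exists y. Qed.

Lemma eps_subdiff_marginalE f xi xb (r e : R) : marginal f xb = r%:E ->
  eps_subdiff (@dotv R n) (marginal f) e xb xi <->
  affine_minorant f xi xb (r - e).
Proof.
move=> mxb; rewrite /eps_subdiff /affine_minorant mxb.
have shift x : ((dotv xi (x - xb) - e)%:E <= marginal f x - r%:E)%E =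
               ((dotv xi (x - xb) + (r - e))%:E <= marginal f x)%E.
  by rewrite leeBrDr // -EFinD addrAC -addrA.
split=> [[_ mc] x y | fc].
- by apply: le_trans (marginal_le f x y); rewrite -shift.
- split=> // x; rewrite shift.
  by apply/ereal_infP => _ [y _ <-]; apply: fc.
Qed.

Definition eps_subdiff_y0 f (e : R) xb (y : 'rV[R]_p) : set 'rV[R]_n :=
  [set xi | eps_subdiff (@dotp R n p) f e (xb, y) (xi, 0)].

Lemma eps_subdiff_y0E f xi xb y (s e : R) : f (xb, y) = s%:E ->
  eps_subdiff_y0 f e xb y xi <-> affine_minorant f xi xb (s - e).
Proof.
move=> fxb; rewrite /eps_subdiff_y0 /eps_subdiff /affine_minorant fxb /=.
have shift x y' :
    ((dotp (xi, 0) ((x, y') - (xb, y)) - e)%:E <= f (x, y') - s%:E)%E =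
    ((dotv xi (x - xb) + (s - e))%:E <= f (x, y'))%E.
  by rewrite dotp_row0r leeBrDr // -EFinD addrAC -addrA.
split=> [[_ fc] x y' | fc]; first by rewrite -shift.
by split=> // -[x y']; rewrite shift.
Qed.

Lemma eps_subdiff_y0_fin f e xb y xi :
  eps_subdiff_y0 f e xb y xi -> exists s, f (xb, y) = s%:E.
Proof. by case; case: (f (xb, y)) => // s _ _; exists s. Qed.

Definition approx_argmin f xb (eta : R) : set 'rV[R]_p :=
  [set y | (f (xb, y) <= marginal f xb + eta%:E)%E].

End AffineMinorant.

Section MarginalSubdiff.
Variables (R : realType) (n p : nat).
Variables (f : 'rV[R]_n * 'rV[R]_p -> \bar R) (xb : 'rV[R]_n) (r : R).
Hypothesis marginal_xb : marginal f xb = r%:E.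

Lemma approx_argmin_neq0 eta : 0 < eta -> approx_argmin f xb eta !=set0.
Proof.
move=> eta0; have : (marginal f xb < marginal f xb + eta%:E)%E.
  by rewrite marginal_xb -EFinD lte_fin ltrDl.
by case/ereal_inf_lt => _ [y _ <-] /ltW; exists y.
Qed.

Lemma eps_subdiff_marginal_sub_y0 eps eta y : approx_argmin f xb eta y ->
  eps_subdiff (@dotv R n) (marginal f) eps xb `<=`
  eps_subdiff_y0 f (eps + eta) xb y.
Proof.
rewrite /approx_argmin /= marginal_xb => fxb xi.
have [s fs] : exists s, f (xb, y) = s%:E.
  move: (marginal_le f xb y) fxb; rewrite marginal_xb.
  by case: (f (xb, y)) => // s _ _; exists s.
move: fxb; rewrite fs -EFinD lee_fin => s_le.
move/(eps_subdiff_marginalE _ _ marginal_xb) => fc.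
by apply/(eps_subdiff_y0E _ _ fs); apply: affine_minorant_le fc; lra.
Qed.

Lemma bigcup_eps_subdiff_y0_sub_marginal eps :
  \bigcap_(eta in [set e : R | 0 < e]) \bigcup_(y in [set: 'rV[R]_p])
      eps_subdiff_y0 f (eps + eta) xb y `<=`
  eps_subdiff (@dotv R n) (marginal f) eps xb.
Proof.
move=> xi xi_in; apply/(eps_subdiff_marginalE _ _ marginal_xb).
apply: affine_minorant_closed => eta eta0.
have [y _ xi_y] := xi_in eta eta0.
have [s fs] := eps_subdiff_y0_fin xi_y.
have r_le : r <= s by rewrite -lee_fin -fs -marginal_xb marginal_le.
move/(eps_subdiff_y0E _ _ fs): xi_y; apply: affine_minorant_le; lra.
Qed.

Lemma bigcap_approx_argmin_sub_bigcup eps :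
  \bigcap_(eta in [set e : R | 0 < e]) \bigcap_(y in approx_argmin f xb eta)
      eps_subdiff_y0 f (eps + eta) xb y `<=`
  \bigcap_(eta in [set e : R | 0 < e]) \bigcup_(y in [set: 'rV[R]_p])
      eps_subdiff_y0 f (eps + eta) xb y.
Proof.
move=> xi xi_in eta eta0; have [y y_min] := approx_argmin_neq0 eta0.
by exists y => //; apply: xi_in.
Qed.

Lemma eps_subdiff_marginal_bigcap eps :
  eps_subdiff (@dotv R n) (marginal f) eps xb =
  \bigcap_(eta in [set e : R | 0 < e]) \bigcap_(y in approx_argmin f xb eta)
      eps_subdiff_y0 f (eps + eta) xb y.
Proof.
apply/seteqP; split=> [xi xi_m eta _ y y_min|xi].
  exact: eps_subdiff_marginal_sub_y0 y_min _ xi_m.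
by move/bigcap_approx_argmin_sub_bigcup/bigcup_eps_subdiff_y0_sub_marginal.
Qed.

Lemma eps_subdiff_marginal_bigcup eps :
  eps_subdiff (@dotv R n) (marginal f) eps xb =
  \bigcap_(eta in [set e : R | 0 < e]) \bigcup_(y in [set: 'rV[R]_p])
      eps_subdiff_y0 f (eps + eta) xb y.
Proof.
apply/seteqP; split; last exact: bigcup_eps_subdiff_y0_sub_marginal.
by rewrite eps_subdiff_marginal_bigcap; apply: bigcap_approx_argmin_sub_bigcup.
Qed.

Lemma eps_subdiff_marginal_argmin eps y : f (xb, y) = r%:E ->
  eps_subdiff (@dotv R n) (marginal f) eps xb = eps_subdiff_y0 f eps xb y.
Proof.
move=> fxb; apply/seteqP; split=> xi.
- by move/(eps_subdiff_marginalE _ _ marginal_xb)/(eps_subdiff_y0E _ _ fxb).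
- by move/(eps_subdiff_y0E _ _ fxb)/(eps_subdiff_marginalE _ _ marginal_xb).
Qed.

End MarginalSubdiff.

Theorem mainTheorem10 (R : realType) (n p : nat)
  (f : 'rV[R]_n * 'rV[R]_p -> \bar R) (xb : 'rV[R]_n) :
  proper_fun f -> nearly_convex_fun f -> marginal f xb \is a fin_num ->
  let m := marginal f in
  let S_ := fun eta : R => [set y : 'rV[R]_p | (f (xb, y) <= m xb + eta%:E)%E] in
  let S := [set y : 'rV[R]_p | m xb = f (xb, y)] in
  (forall eps : R, 0 <= eps ->
     eps_subdiff (@dotv R n) m eps xb =
       \bigcap_(eta in [set e : R | 0 < e]) \bigcap_(y in S_ eta)
          [set xi | eps_subdiff (@dotp R n p) f (eps + eta) (xb, y) (xi, 0)]
     /\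
     eps_subdiff (@dotv R n) m eps xb =
       \bigcap_(eta in [set e : R | 0 < e]) \bigcup_(y in [set: 'rV[R]_p])
          [set xi | eps_subdiff (@dotp R n p) f (eps + eta) (xb, y) (xi, 0)])
  /\
  (eps_subdiff (@dotv R n) m 0 xb =
       \bigcap_(eta in [set e : R | 0 < e]) \bigcap_(y in S_ eta)
          [set xi | eps_subdiff (@dotp R n p) f eta (xb, y) (xi, 0)]
   /\
   eps_subdiff (@dotv R n) m 0 xb =
       \bigcap_(eta in [set e : R | 0 < e]) \bigcup_(y in [set: 'rV[R]_p])
          [set xi | eps_subdiff (@dotp R n p) f eta (xb, y) (xi, 0)])
  /\
  (S !=set0 ->
     forall eps : R, 0 <= eps -> forall y, S y ->
       eps_subdiff (@dotv R n) m eps xb =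
         [set xi | eps_subdiff (@dotp R n p) f eps (xb, y) (xi, 0)]).
Proof.
move=> _ _ + m S_ S; case Emxb: (marginal f xb) => [r| |] // _.
split=> [eps _|].
  by split; [exact: eps_subdiff_marginal_bigcap Emxb eps |
             exact: eps_subdiff_marginal_bigcup Emxb eps].
split.
  split; [rewrite (eps_subdiff_marginal_bigcap Emxb 0) |
          rewrite (eps_subdiff_marginal_bigcup Emxb 0)];
    by apply: eq_bigcapr => eta _; rewrite add0r.
move=> _ eps _ y Sy; apply: (eps_subdiff_marginal_argmin Emxb).
by rewrite -Emxb; apply: esym; exact: Sy.
Qed.
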